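(* In the mixture setting, let $W$ be any measurable real-valued function on the space of component parameters. For $\theta$ with components $(\xi_1,\dots,\xi_G)$ let $\rho_\theta$ be the permutation that sorts the components by $W$ in nondecreasing order (ties broken by the original index), so that $P_{\rho_\theta}(\theta)$ has $W$-values nondecreasing in the component index. For each permutation $\sigma$ of $\{1,\dots,G\}$ define the ordering map $\psi_\sigma(\theta)=P_{\sigma}(P_{\rho_\theta}(\theta))$, so that the components $\xi'_1,\dots,\xi'_G$ of $\psi_\sigma(\theta)$ satisfy $W(\xi'_{\sigma^{-1}(1)})\le\dots\le W(\xi'_{\sigma^{-1}(G)})$. Let $E=E_{\hat\theta,\hat\Sigma,c}$ and $B=B_{\hat\theta,\hat\Sigma,c,\alpha}\subseteq E$. Define the $G\times G$ matrix $\Delta$ by $\Delta_{g_1,g_2}=1$ if $W(\xi_{g_1})<W(\xi_{g_2})$ for every $\theta\in E$, and $\Delta_{g_1,g_2}=0$ otherwise; let $\Omega$ be the set of permutations $\sigma$ such that the sequence $(\sigma^{-1}(1),\dots,\sigma^{-1}(G))$ is a topological ordering of the directed graph with adjacency matrix $\Delta$ (i.e. $g_1$ appears before $g_2$ whenever $\Delta_{g_1,g_2}=1$). Then for every sample $\theta^{(T/2+1)\star},\dots,\theta^{(T)\star}$, $$\frac{1}{G!}\sum_{\sigma}\frac{1}{T/2}\sum_{\substack{t=T/2+1\\P_\sigma(\theta^{(t)\star})\in B}}^T\frac{1/V(B)}{\pi(\theta^{(t)\star})L(\theta^{(t)\star})}=\frac{1}{G!}\sum_{\sigma\in\Omega}\frac{1}{T/2}\sum_{\substack{t=T/2+1\\\psi_\sigma(\theta^{(t)\star})\in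 B}}^T\frac{1/V(B)}{\pi(\theta^{(t)\star})L(\theta^{(t)\star})},$$ where the left-hand sum is over all $G!$ permutations.
   Context: Mixture model with parameter $\theta=(\xi_1,\dots,\xi_G,\tau_1,\dots,\tau_{G-1})\in\mathbb{R}^R$, prior $\pi$, likelihood $L$. For a permutation $\sigma$ of $\{1,\dots,G\}$, $P_\sigma$ is the relabelling map sending $\theta$ to the parameter with components $(\xi_{\sigma(1)},\dots,\xi_{\sigma(G)})$ and proportions $(\tau_{\sigma(1)},\dots,\tau_{\sigma(G)})$, $\tau_G=1-\sum_{g<G}\tau_g$. $E_{\hat\theta,\hat\Sigma,c}=\{\theta:(\theta-\hat\theta)^\top\hat\Sigma^{-1}(\theta-\hat\theta)<c^2\}$ for a vector $\hat\theta$, positive definite $\hat\Sigma$ and $c>0$; $B_{\hat\theta,\hat\Sigma,c,\alpha}=E_{\hat\theta,\hat\Sigma,c}\cap\{\theta:\pi(\theta)L(\theta)>\hat q_\alpha\}$ for a threshold $\hat q_\alpha>0$, with $0<V(B)<\infty$. In the paper $W$ is built from quadratic discriminant analysis, but any measurable $W$ is allowed. *)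

From HB Require Import structures.
From mathcomp Require Import all_boot all_order all_algebra all_fingroup.
From mathcomp Require Import boolp reals.
Set Implicit Arguments. Unset Strict Implicit. Unset Printing Implicit Defensive.
Import Order.TTheory GRing.Theory Num.Theory.
Local Open Scope ring_scope.

Section Mixture.
Variables (R : realType) (G d : nat).

(* dimension R of the parameter space: G components in R^d, then G-1 proportions *)
Definition pdim := (G * d + G.-1)%N.
Definition param := 'rV[R]_pdim.

Definition xi (th : param) (g : 'I_G) : 'rV[R]_d := row g (vec_mx (lsubmx th)).

Definition tau (th : param) (g : 'I_G) : R :=
  match (insub (val g) : option 'I_(G.-1)) with
  | Some i => rsubmx th 0 i
  | None => 1 - \sum_(i < G.-1) rsubmx th 0 i
  end.

Definition relabel (s : {perm 'I_G}) (th : param) : param :=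
  row_mx (mxvec (\matrix_(g < G, j < d) xi th (s g) 0 j))
         (\row_(i < G.-1) tau th (s (widen_ord (leq_pred G) i))).

Definition key_lt (W : 'rV[R]_d -> R) (th : param) (i j : 'I_G) : bool :=
  (W (xi th i) < W (xi th j)) || ((W (xi th i) == W (xi th j)) && (i < j)%N).

Definition rho (W : 'rV[R]_d -> R) (th : param) : {perm 'I_G} :=
  odflt 1%g [pick r : {perm 'I_G} | sorted (key_lt W th) [seq r k | k <- enum 'I_G]].

Definition psi (W : 'rV[R]_d -> R) (s : {perm 'I_G}) (th : param) : param :=
  relabel s (relabel (rho W th) th).

Definition posdef n (S : 'M[R]_n) : Prop :=
  S^T = S /\ forall v : 'rV[R]_n, v != 0 -> 0 < (v *m S *m v^T) 0 0.

Definition inE (thh : param) (S : 'M[R]_pdim) (c : R) (th : param) : bool :=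
  ((th - thh) *m invmx S *m (th - thh)^T) 0 0 < c ^+ 2.

Definition inB (thh : param) (S : 'M[R]_pdim) (c : R) (pi L : param -> R) (q : R)
  (th : param) : bool :=
  inE thh S c th && (q < pi th * L th).

Definition Delta (W : 'rV[R]_d -> R) (thh : param) (S : 'M[R]_pdim) (c : R)
  (g1 g2 : 'I_G) : Prop :=
  forall th : param, inE thh S c th -> W (xi th g1) < W (xi th g2).

Definition topo_order (adj : 'I_G -> 'I_G -> Prop) (s : seq 'I_G) : Prop :=
  perm_eq s (enum 'I_G) /\
  forall g1 g2, adj g1 g2 -> (index g1 s < index g2 s)%N.

Definition Omega (W : 'rV[R]_d -> R) (thh : param) (S : 'M[R]_pdim) (c : R)
  (s : {perm 'I_G}) : Prop :=
  topo_order (Delta W thh S c) [seq (s^-1)%g k | k <- enum 'I_G].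

End Mixture.

From Pilot Require Import Defs.
From HB Require Import structures.
From mathcomp Require Import all_boot all_order all_algebra all_fingroup.
From mathcomp Require Import boolp reals.
Import Order.TTheory GRing.Theory Num.Theory.
Local Open Scope ring_scope.

(* Relabelling is a right action of the permutation group, so for fixed theta
   the substitution sigma := sigma * rho_theta turns P_sigma(theta) into
   psi_sigma(theta) and is a bijection of the summation index.  After it, a
   term with psi_sigma(theta) in B <= E forces sigma into Omega: the
   components of P_(rho_theta)(theta) are W-sorted, so any constraint
   W(xi_g1) < W(xi_g2) valid on E puts sigma^-1 g1 before sigma^-1 g2. *)

Lemma perm_eq_map_perm_enum (T : finType) (s : {perm T}) :
  perm_eq [seq s x | x <- enum T] (enum T).
Proof.
apply: uniq_perm; rewrite ?(map_inj_uniq (@perm_inj _ s)) ?enum_uniq //.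
by move=> x; rewrite -{1}(permKV s x) (mem_map (@perm_inj _ s)) !mem_enum.
Qed.

Lemma uniq_sorted_strict (T : eqType) (e : rel T) (s : seq T) :
  uniq s -> sorted (fun x y => (x == y) || e x y) s -> sorted e s.
Proof.
case: s => //= x s; elim: s x => //= y s IHs x /andP[x_notin uniq_ys].
case/andP=> /orP[/eqP eq_xy|e_xy] path_ys; last by rewrite e_xy IHs.
by move: x_notin; rewrite eq_xy mem_head.
Qed.

Section SortingPermutation.
Variables (R : realType) (G d : nat) (W : 'rV[R]_d -> R) (th : param R G d).

Local Notation klt := (key_lt W th).

Lemma key_lt_trans : transitive klt.
Proof.
move=> j i k; rewrite /key_lt.
case/orP=> [h1|/andP[/eqP e1 h1]]; case/orP=> [h2|/andP[/eqP e2 h2]].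
- by rewrite (lt_trans h1 h2).
- by rewrite -e2 h1.
- by rewrite e1 h2.
- by rewrite e1 e2 eqxx (ltn_trans h1 h2) orbT.
Qed.

Lemma key_lt_total i j : i != j -> klt i j || klt j i.
Proof.
move=> nij; rewrite /key_lt.
by case: (ltgtP (W (xi th i)) (W (xi th j))) => //= _; rewrite -neq_ltn.
Qed.

Lemma key_lt_W_le {i j} : klt i j -> W (xi th i) <= W (xi th j).
Proof. by case/orP=> [/ltW|/andP[/eqP-> _]]. Qed.

Lemma exists_key_sorted_perm :
  exists r : {perm 'I_G}, sorted klt [seq r k | k <- enum 'I_G].
Proof.
pose kle i j := (i == j) || klt i j.
have kle_total : total kle.
  by move=> i j; rewrite /kle; case: (eqVneq i j) => //= /key_lt_total.
have [r def_r] : exists r : {perm 'I_G},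
    [seq r k | k <- enum 'I_G] = sort kle (enum 'I_G).
  have /tuple_permP[r def_r] : perm_eq (sort kle (enum 'I_G)) (ord_tuple G).
    by rewrite perm_sort.
  exists r; rewrite def_r /= -val_ord_tuple.
  by apply: eq_map => i; rewrite tnth_ord_tuple.
exists r; rewrite def_r uniq_sorted_strict ?sort_uniq ?enum_uniq //.
exact: sort_sorted.
Qed.

Lemma rho_sorted : sorted klt [seq rho W th k | k <- enum 'I_G].
Proof.
rewrite /rho; case: pickP => // no_sorted.
by case: exists_key_sorted_perm => r; rewrite no_sorted.
Qed.

Lemma rho_key_lt {a b : 'I_G} : (a < b)%N -> klt (rho W th a) (rho W th b).
Proof.
move=> lt_ab; have := sorted_ltn_nth key_lt_trans (rho W th a) rho_sorted.
rewrite size_map size_enum_ord => /(_ a b (ltn_ord a) (ltn_ord b) lt_ab).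
by rewrite !(nth_map a) -?enumT ?size_enum_ord ?nth_ord_enum.
Qed.

Lemma rho_W_lt_ltn (a b : 'I_G) :
  W (xi th (rho W th a)) < W (xi th (rho W th b)) -> (a < b)%N.
Proof.
move=> W_lt; rewrite ltnNge leq_eqVlt; apply/negP => /orP[/eqP eq_ab|lt_ba].
  by move: W_lt; rewrite (val_inj eq_ab) ltxx.
by move: W_lt; rewrite ltNge (key_lt_W_le (rho_key_lt lt_ba)).
Qed.

End SortingPermutation.

Section RelabelAction.
Variables (R : realType) (n d : nat).
Local Notation G := n.+1.
Implicit Types (s r : {perm 'I_G}) (th : param R G d).

Lemma xi_relabel s th g : xi (relabel s th) g = xi th (s g).
Proof. by apply/rowP => j; rewrite /xi /relabel row_mxKl mxvecK !mxE. Qed.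

Lemma tau_widen th (i : 'I_n) : tau th (widen_ord (leqnSn n) i) = rsubmx th 0 i.
Proof.
rewrite /tau; case: insubP => [j _ val_j|] /=; last by rewrite ltn_ord.
by congr (rsubmx th 0 _); apply: val_inj.
Qed.

Lemma tau_max th : tau th ord_max = 1 - \sum_(i < n) rsubmx th 0 i.
Proof. by rewrite /tau insubN //= ltnn. Qed.

Lemma sum_tau th : \sum_(g < G) tau th g = 1.
Proof.
rewrite big_ord_recr /= tau_max.
under eq_bigr => i _ do rewrite tau_widen.
by rewrite addrC subrK.
Qed.

Lemma tau_relabel s th g : tau (relabel s th) g = tau th (s g).
Proof.
have rsub_relabel (i : 'I_n) :
    rsubmx (relabel s th) 0 i = tau th (s (widen_ord (leqnSn n) i)).
  by rewrite row_mxKr mxE; congr (tau th (s _)); apply: val_inj.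
have [lt_gn|g_max] := ltnP g n.
  rewrite -[g](_ : widen_ord (leqnSn n) (Ordinal lt_gn) = g).
    by rewrite tau_widen rsub_relabel.
  exact: val_inj.
rewrite -[g](_ : ord_max = g); last first.
  by apply/val_inj/eqP; rewrite eqn_leq g_max -ltnS ltn_ord.
(* The last proportion is 1 minus the others, and the permuted proportions
   still sum to 1. *)
have : \sum_(g < G) tau th (s g) = 1.
  by rewrite -(sum_tau th) [RHS](reindex_inj (@perm_inj _ s)).
rewrite tau_max big_ord_recr /= => <-.
by rewrite (eq_bigr _ (fun i _ => rsub_relabel i)) addrAC subrr add0r.
Qed.

Lemma relabelM s r th : relabel (s * r)%g th = relabel s (relabel r th).
Proof.
rewrite [LHS]/relabel {1}/relabel; congr row_mx.
  congr mxvec; apply/matrixP => g j.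
  by rewrite [LHS]mxE [RHS]mxE xi_relabel permM.
by apply/rowP => i; rewrite [LHS]mxE [RHS]mxE tau_relabel permM.
Qed.

Lemma psiE (W : 'rV[R]_d -> R) s th : psi W s th = relabel (s * rho W th)%g th.
Proof. by rewrite /psi relabelM. Qed.

Lemma Omega_psi (W : 'rV[R]_d -> R) thh (S : 'M[R]_(pdim G d)) c s th :
  Defs.inE thh S c (psi W s th) -> Omega W thh S c s.
Proof.
move=> E_psi; split; first exact: perm_eq_map_perm_enum.
move=> g1 g2 /(_ _ E_psi); rewrite /psi !xi_relabel => W_lt.
rewrite -[g1](permK s) -[g2](permK s) !(index_map (@perm_inj _ s^-1)).
by rewrite !index_enum_ord; apply: rho_W_lt_ltn W_lt.
Qed.

Lemma sum_relabel_inB_Omega (W : 'rV[R]_d -> R) thh (S : 'M[R]_(pdim G d))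
    c pi L q th (x : R) :
  \sum_s (if inB thh S c pi L q (relabel s th) then x else 0)
  = \sum_(s | `[< Omega W thh S c s >])
      (if inB thh S c pi L q (psi W s th) then x else 0).
Proof.
rewrite (reindex_inj (@mulIg _ (rho W th))) /= [RHS]big_mkcond /=.
apply: eq_bigr => s _; rewrite -psiE.
case: asboolP => // notOmega; case: ifP => // /andP[E_psi _].
by case: notOmega; apply: Omega_psi E_psi.
Qed.

End RelabelAction.

Theorem theorem4 (R : realType) (G d : nat) (hG : (0 < G)%N)
  (W : 'rV[R]_d -> R) (pi L : param R G d -> R)
  (hpi : forall th, 0 <= pi th) (hL : forall th, 0 <= L th)
  (thh : param R G d) (S : 'M[R]_(pdim G d)) (hS : posdef S)
  (c : R) (hc : 0 < c) (q : R) (hq : 0 < q)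
  (VB : R) (hVB : 0 < VB)
  (T : nat) (ths : nat -> param R G d) :
  (G`!)%:R^-1 * \sum_(s : {perm 'I_G})
     ((T./2)%:R^-1 * \sum_(T./2.+1 <= t < T.+1 | inB thh S c pi L q (relabel s (ths t)))
        (VB^-1 / (pi (ths t) * L (ths t))))
  =
  (G`!)%:R^-1 * \sum_(s : {perm 'I_G} | `[< Omega W thh S c s >])
     ((T./2)%:R^-1 * \sum_(T./2.+1 <= t < T.+1 | inB thh S c pi L q (psi W s (ths t)))
        (VB^-1 / (pi (ths t) * L (ths t)))).
Proof.
case: G hG W pi L hpi hL thh S hS ths => // n _ W pi L _ _ thh S _ ths.
rewrite -!big_distrr /=; congr (_ * (_ * _)).
under [LHS]eq_bigr => s _ do rewrite big_mkcond.
under [RHS]eq_bigr => s _ do rewrite big_mkcond.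
rewrite [LHS]exchange_big [RHS]exchange_big /=.
by apply: eq_bigr => t _; apply: sum_relabel_inB_Omega.
Qed.
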